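(* Let $X=X_1\times\cdots\times X_r$ with $X_i$ smooth algebraic $k$-varieties, and $a(\mathbf T)=\sum_{\mathbf n\in\mathbb N^r}a_{\mathbf n}\mathbf T^{\mathbf n}\in\overline{\mathscr M}_X^{\hat\mu}[[\mathbf T]]$, $\mathbf T=(T_1,\dots,T_r)$. If $a(\mathbf T)$ is integrable, then for every ordered cell $\Delta\subset\mathbb N^r$ the series $a_\Delta(\mathbf T):=\sum_{\mathbf n\in\Delta}a_{\mathbf n}\mathbf T^{\mathbf n}$ is integrable.
   Context: $k$ is a field of characteristic zero; $\overline{\mathscr M}_X^{\hat\mu}$ is the monodromic Grothendieck ring of $X$-varieties with good $\hat\mu$-action, localized at $\mathbb L$ and at the elements $1-\mathbb L^n$ ($n\ge1$). A series is integrable if it lies in $\overline{\mathscr M}_X^{\hat\mu}[\mathbf T][(1-\mathbb L^m\mathbf T^{\mathbf n})^{-1}]_{m<0,\ \mathbf n\in\mathbb N^r\setminus\{0\}}\subset\overline{\mathscr M}_X^{\hat\mu}[[\mathbf T]]$. For integers $0=r_0<r_1<\cdots<r_s=r$, the basic ordered cell $\Delta_{(r_0,\dots,r_s)}$ is the set of $\mathbf n\in\mathbb N^r$ with $n_{r_{j-1}+1}=\cdots=n_{r_j}$ for each $j$ and $n_{r_{j-1}}<n_{r_j}$ for $2\le j\le s$. An ordered cell is the image of a basic ordered cell under a coordinate permutation $(n_1,\dots,n_r)\mapsto(n_{\rho(1)},\dots,n_{\rho(r)})$. *)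

From HB Require Import structures.
From mathcomp Require Import all_boot all_order all_algebra all_fingroup.
Set Implicit Arguments. Unset Strict Implicit. Unset Printing Implicit Defensive.
Import Order.TTheory GRing.Theory Num.Theory.
Local Open Scope ring_scope.

(* Exponent vectors n in N^r and formal power series in T = (T_1,..,T_r)
   with coefficients in A, represented by their coefficient functions. *)
Definition expo (r : nat) := 'I_r -> nat.
Definition fps (A : Type) (r : nat) := expo r -> A.

Definition expo_le (r : nat) (v n : expo r) : bool := [forall i, (v i <= n i)%N].

(* s * (1 - c T^v) *)
Definition mul_one_minus (A : comUnitRingType) (r : nat) (c : A) (v : expo r)
  (s : fps A r) : fps A r :=
  fun n => s n - c * (if expo_le v n then s (fun i => (n i - v i)%N) else 0).

Definition is_poly (A : comUnitRingType) (r : nat) (s : fps A r) : Prop :=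
  exists B : nat, forall n : expo r, ~~ [forall i, (n i <= B)%N] -> s n = 0.

Definition mul_factors (A : comUnitRingType) (r : nat) (L : A)
  (fs : seq (int * expo r)) (s : fps A r) : fps A r :=
  foldr (fun p acc => mul_one_minus (L ^ p.1) p.2 acc) s fs.

(* s is integrable: s lies in A[T][(1 - L^m T^v)^{-1}]_{m<0, v in N^r\{0}}
   inside A[[T]], i.e. s * (product of such factors) is a polynomial. *)
Definition integrable (A : comUnitRingType) (r : nat) (L : A) (s : fps A r) : Prop :=
  exists fs : seq (int * expo r),
    all (fun p => (p.1 < 0)%R && [exists i, p.2 i != 0%N]) fs /\
    is_poly (mul_factors L fs s).

(* 1-based coordinate n_k, k = 1..r (0 outside the range) *)
Definition coord (r : nat) (n : expo r) (k : nat) : nat :=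
  if insub k.-1 is Some i then n i else 0%N.

Definition cell_seq (r : nat) (rs : seq nat) : Prop :=
  [/\ head 1%N rs = 0%N, sorted ltn rs & last 0%N rs = r].

Definition in_basic_cell (r : nat) (rs : seq nat) (n : expo r) : Prop :=
  forall j : nat, (1 <= j < size rs)%N ->
    (forall k : nat, (nth 0 rs j.-1 < k <= nth 0 rs j)%N ->
        coord n k = coord n (nth 0 rs j)) /\
    ((2 <= j)%N -> (coord n (nth 0 rs j.-1) < coord n (nth 0 rs j))%N).

Definition ordered_cell (r : nat) (Delta : expo r -> Prop) : Prop :=
  exists (rs : seq nat) (rho : {perm 'I_r}),
    cell_seq r rs /\
    forall n : expo r,
      Delta n <-> exists m : expo r, in_basic_cell rs m /\ forall i, n i = m (rho i).

(* An ordered cell is cut out by finitely many conditions [n_i = n_j] and [n_i < n_j], i.e.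
   by hyperplanes and half-spaces of integral linear forms, so it suffices that restriction to
   a half-space [{n | b <= lam . n}] preserves integrability.  Write [s = P / prod (1 - L^m T^v)]
   and induct on the number of factors.  A factor with [lam . v = 0] commutes with the
   restriction.  A factor with [lam . v > 0] and one with [lam . v < 0] are traded for a factor
   of [lam]-weight zero, using
     [1 - ab T^(u+w) = (1 - a T^u) + (1 - b T^w) - (1 - a T^u)(1 - b T^w)]
   and the divisibility of [1 - a^k T^(k u)] by [1 - a T^u].  If all weights are positive,
   [s] vanishes below some [lam]-level, and the slice of [s] at level [b] is the slice of
   [(1 - c T^v) s] plus [c T^v] times the slice of [s] at the lower level [b - lam . v]; this
   gives all slices, hence all half-spaces, by induction on the level.  Negative weights
   reduce to positive ones by passing to the complementary half-space. *)

From Pilot Require Import Defs.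
From HB Require Import structures.
From mathcomp Require Import all_boot all_order all_algebra all_fingroup.
From mathcomp Require Import zify ring.
From Stdlib Require Import FunctionalExtensionality.
Set Implicit Arguments. Unset Strict Implicit. Unset Printing Implicit Defensive.
Import Order.TTheory GRing.Theory Num.Theory.
Local Open Scope ring_scope.

Section SeqSplit.
Variables (T : Type) (P : pred T).

Lemma split_of_has s : has P s -> exists s1 x s2, s = s1 ++ x :: s2 /\ P x.
Proof.
elim: s => [|y s IH] //= /orP [Py|/IH [s1 [x [s2 [-> Px]]]]]; first by exists [::], y, s.
by exists (y :: s1), x, s2.
Qed.

Lemma all_cat_cons s1 x s2 : all P (s1 ++ x :: s2) = all P (x :: s1 ++ s2).
Proof. by rewrite /= !all_cat /= andbCA. Qed.

Lemma has_cat_cons s1 x s2 : has P (s1 ++ x :: s2) = has P (x :: s1 ++ s2).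
Proof. by rewrite /= !has_cat /= orbCA. Qed.

Lemma count_cat_cons s1 x s2 : count P (s1 ++ x :: s2) = count P (x :: s1 ++ s2).
Proof. by rewrite /= !count_cat /= addnCA. Qed.

End SeqSplit.

Section FormalSeries.
Variables (A : comUnitRingType) (r : nat).
Implicit Types (s t : fps A r) (u v n : expo r) (c d : A).

Lemma fps_ext s t : (forall n, s n = t n) -> s = t.
Proof. exact: functional_extensionality. Qed.

Lemma expo_ext u v : (forall i, u i = v i) -> u = v.
Proof. exact: functional_extensionality. Qed.

Definition expo_add u v : expo r := fun i => (u i + v i)%N.
Definition expo_sub n v : expo r := fun i => (n i - v i)%N.
Definition expo_scale (k : nat) v : expo r := fun i => (k * v i)%N.
Definition expo_sum n : nat := \sum_i n i.

Lemma expo_leP v n : reflect (forall i, (v i <= n i)%N) (expo_le v n).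
Proof. exact: forallP. Qed.

Lemma expo_addC u v : expo_add u v = expo_add v u.
Proof. by apply: expo_ext => i; rewrite /expo_add addnC. Qed.

Lemma expo_le_add u v n :
  expo_le (expo_add u v) n = expo_le u n && expo_le v (expo_sub n u).
Proof.
apply/expo_leP/andP => [le_uv_n|[/expo_leP le_u /expo_leP le_v] i].
  by split; apply/expo_leP => i; have := le_uv_n i; rewrite /expo_add /expo_sub; lia.
by have := le_u i; have := le_v i; rewrite /expo_add /expo_sub; lia.
Qed.

Lemma expo_sub_add n u v : expo_sub (expo_sub n u) v = expo_sub n (expo_add u v).
Proof. by apply: expo_ext => i; rewrite /expo_sub /expo_add subnDA. Qed.

Lemma expo_sum_sub_lt n v : expo_le v n -> [exists i, v i != 0%N] ->
  (expo_sum (expo_sub n v) < expo_sum n)%N.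
Proof.
move=> /expo_leP le_vn /existsP [i vi_neq0].
have -> : expo_sum n = (expo_sum (expo_sub n v) + expo_sum v)%N.
  by rewrite /expo_sum -big_split; apply: eq_bigr => j _; rewrite /expo_sub /= subnK.
have : (v i <= expo_sum v)%N by rewrite /expo_sum (bigD1 i) //= leq_addr.
lia.
Qed.

(* [shift v s] is [T^v * s]. *)
Definition shift v s : fps A r :=
  fun n => if expo_le v n then s (expo_sub n v) else 0.
Definition fps0 : fps A r := fun _ => 0.
Definition fps_add s t : fps A r := fun n => s n + t n.
Definition fps_opp s : fps A r := fun n => - s n.
Definition fps_scale c s : fps A r := fun n => c * s n.

Lemma shift_shift u v s : shift u (shift v s) = shift (expo_add u v) s.
Proof.
apply: fps_ext => n; rewrite /shift expo_le_add.
by case: (expo_le u n) => //=; case: (expo_le v _); rewrite // expo_sub_add.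
Qed.

Lemma shiftC u v s : shift u (shift v s) = shift v (shift u s).
Proof. by rewrite !shift_shift expo_addC. Qed.

Lemma shift_add v s t : shift v (fps_add s t) = fps_add (shift v s) (shift v t).
Proof. by apply: fps_ext => n; rewrite /shift /fps_add; case: ifP; rewrite ?addr0. Qed.

Lemma shift_scale v c s : shift v (fps_scale c s) = fps_scale c (shift v s).
Proof. by apply: fps_ext => n; rewrite /shift /fps_scale; case: ifP; rewrite ?mulr0. Qed.

Lemma shift_opp v s : shift v (fps_opp s) = fps_opp (shift v s).
Proof. by apply: fps_ext => n; rewrite /shift /fps_opp; case: ifP; rewrite ?oppr0. Qed.

Lemma mul_one_minusE c v s n : mul_one_minus c v s n = s n - c * shift v s n.
Proof. by []. Qed.

Lemma mul_one_minus_add c v s t :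
  mul_one_minus c v (fps_add s t) = fps_add (mul_one_minus c v s) (mul_one_minus c v t).
Proof.
by apply: fps_ext => n; rewrite mul_one_minusE shift_add /fps_add !mul_one_minusE; ring.
Qed.

Lemma mul_one_minus_scale c d v s :
  mul_one_minus c v (fps_scale d s) = fps_scale d (mul_one_minus c v s).
Proof.
by apply: fps_ext => n; rewrite mul_one_minusE shift_scale /fps_scale !mul_one_minusE; ring.
Qed.

Lemma mul_one_minus_opp c v s :
  mul_one_minus c v (fps_opp s) = fps_opp (mul_one_minus c v s).
Proof.
by apply: fps_ext => n; rewrite mul_one_minusE shift_opp /fps_opp !mul_one_minusE; ring.
Qed.

Lemma mul_one_minus_shift c u v s :
  mul_one_minus c v (shift u s) = shift u (mul_one_minus c v s).
Proof.
apply: fps_ext => n; rewrite mul_one_minusE shiftC /shift.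
by case: (expo_le u n); rewrite ?mul_one_minusE ?mulr0 ?subr0.
Qed.

Lemma mul_one_minusC c d u v s :
  mul_one_minus c u (mul_one_minus d v s) = mul_one_minus d v (mul_one_minus c u s).
Proof.
apply: fps_ext => n.
rewrite [LHS]mul_one_minusE [RHS]mul_one_minusE -!mul_one_minus_shift.
by rewrite !mul_one_minusE shiftC; ring.
Qed.

Lemma mul_one_minus_mul c d u w s :
  mul_one_minus (c * d) (expo_add u w) s =
  fps_add (fps_add (mul_one_minus c u s) (mul_one_minus d w s))
          (fps_opp (mul_one_minus c u (mul_one_minus d w s))).
Proof.
apply: fps_ext => n; rewrite /fps_add /fps_opp !mul_one_minusE.
by rewrite -mul_one_minus_shift mul_one_minusE shift_shift (expo_addC w u); ring.
Qed.

End FormalSeries.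

Arguments fps0 {A r}.

Section Integrability.
Variables (A : comUnitRingType) (r : nat) (L : A).
Implicit Types (s t : fps A r) (u v n : expo r) (c d : A).
Implicit Types (fs gs : seq (int * expo r)) (p : int * expo r).

Definition admissible p : bool := (p.1 < 0) && [exists i, p.2 i != 0%N].

Lemma mul_factors_cons p fs s :
  mul_factors L (p :: fs) s = mul_one_minus (L ^ p.1) p.2 (mul_factors L fs s).
Proof. by []. Qed.

Lemma mul_factors_cat fs gs s :
  mul_factors L (fs ++ gs) s = mul_factors L fs (mul_factors L gs s).
Proof. exact: foldr_cat. Qed.

Lemma mul_factors_one_minus fs c v s :
  mul_factors L fs (mul_one_minus c v s) = mul_one_minus c v (mul_factors L fs s).
Proof. by elim: fs => //= p fs IH; rewrite IH mul_one_minusC. Qed.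

Lemma mul_factorsC fs gs s :
  mul_factors L fs (mul_factors L gs s) = mul_factors L gs (mul_factors L fs s).
Proof. by elim: gs => //= p gs IH; rewrite mul_factors_one_minus IH. Qed.

Lemma mul_factors_cat_cons fs p gs s :
  mul_factors L (fs ++ p :: gs) s =
  mul_one_minus (L ^ p.1) p.2 (mul_factors L (fs ++ gs) s).
Proof. by rewrite !mul_factors_cat mul_factors_cons mul_factors_one_minus. Qed.

Lemma mul_factors_add fs s t :
  mul_factors L fs (fps_add s t) = fps_add (mul_factors L fs s) (mul_factors L fs t).
Proof. by elim: fs => //= p fs IH; rewrite IH mul_one_minus_add. Qed.

Lemma mul_factors_scale fs d s :
  mul_factors L fs (fps_scale d s) = fps_scale d (mul_factors L fs s).
Proof. by elim: fs => //= p fs IH; rewrite IH mul_one_minus_scale. Qed.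

Lemma mul_factors_opp fs s :
  mul_factors L fs (fps_opp s) = fps_opp (mul_factors L fs s).
Proof. by elim: fs => //= p fs IH; rewrite IH mul_one_minus_opp. Qed.

Lemma mul_factors_shift fs u s :
  mul_factors L fs (shift u s) = shift u (mul_factors L fs s).
Proof. by elim: fs => //= p fs IH; rewrite IH mul_one_minus_shift. Qed.

Lemma is_poly0 : is_poly (fps0 : fps A r).
Proof. by exists 0%N. Qed.

Lemma is_poly_add s t : is_poly s -> is_poly t -> is_poly (fps_add s t).
Proof.
move=> [B sB] [C tC]; exists (maxn B C) => n n_out.
rewrite /fps_add sB ?tC ?addr0 //; apply: contra n_out => /forallP n_in;
  by apply/forallP => i; have := n_in i; lia.
Qed.

Lemma is_poly_scale d s : is_poly s -> is_poly (fps_scale d s).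
Proof. by move=> [B sB]; exists B => n n_out; rewrite /fps_scale sB ?mulr0. Qed.

Lemma is_poly_opp s : is_poly s -> is_poly (fps_opp s).
Proof. by move=> [B sB]; exists B => n n_out; rewrite /fps_opp sB ?oppr0. Qed.

Lemma is_poly_shift u s : is_poly s -> is_poly (shift u s).
Proof.
move=> [B sB]; exists (B + \max_i u i)%N => n /forallPn [i n_out].
rewrite /shift; case: ifP => // _; apply: sB; apply/forallPn; exists i.
move: n_out; rewrite /expo_sub; have := @leq_bigmax (ordinal r) u i.
by move: (\max_(_ < r) u _) => m; lia.
Qed.

Lemma is_poly_mul_one_minus c v s : is_poly s -> is_poly (mul_one_minus c v s).
Proof.
move=> s_poly.
have -> : mul_one_minus c v s = fps_add s (fps_opp (fps_scale c (shift v s))) by [].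
exact/is_poly_add/is_poly_opp/is_poly_scale/is_poly_shift.
Qed.

Lemma is_poly_mul_factors fs s : is_poly s -> is_poly (mul_factors L fs s).
Proof. by elim: fs => //= p fs IH /IH; apply: is_poly_mul_one_minus. Qed.

(* [(1 - c T^v)] divides [(1 - c^q T^(q v))]. *)
Lemma is_poly_mul_one_minus_pow c v q s :
  is_poly (mul_one_minus c v s) ->
  is_poly (mul_one_minus (c ^+ q) (expo_scale q v) s).
Proof.
move=> s_poly; elim: q => [|q IH].
  have -> : mul_one_minus (c ^+ 0) (expo_scale 0 v) s = fps0.
    apply: fps_ext => n; rewrite mul_one_minusE /shift.
    have -> : expo_le (expo_scale 0 v) n by apply/expo_leP => i; rewrite /expo_scale.
    have -> : expo_sub n (expo_scale 0 v) = n.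
      by apply: expo_ext => i; rewrite /expo_sub /expo_scale subn0.
    by rewrite expr0 mul1r subrr.
  exact: is_poly0.
have -> : mul_one_minus (c ^+ q.+1) (expo_scale q.+1 v) s =
    fps_add (mul_one_minus (c ^+ q) (expo_scale q v) s)
            (fps_scale (c ^+ q) (shift (expo_scale q v) (mul_one_minus c v s))).
  apply: fps_ext => n.
  rewrite /fps_add /fps_scale -mul_one_minus_shift !mul_one_minusE shift_shift.
  have -> : expo_add v (expo_scale q v) = expo_scale q.+1 v.
    by apply: expo_ext => i; rewrite /expo_add /expo_scale mulSn.
  by rewrite exprSr; ring.
exact/is_poly_add/is_poly_scale/is_poly_shift.
Qed.

Lemma integrable_poly s : is_poly s -> integrable L s.
Proof. by exists [::]. Qed.

Lemma integrable0 : integrable L (fps0 : fps A r).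
Proof. exact/integrable_poly/is_poly0. Qed.

Lemma integrable_add s t : integrable L s -> integrable L t -> integrable L (fps_add s t).
Proof.
move=> [fs [fs_adm s_poly]] [gs [gs_adm t_poly]]; exists (fs ++ gs).
split; first by rewrite all_cat fs_adm gs_adm.
rewrite mul_factors_cat !mul_factors_add.
apply: is_poly_add; last exact: is_poly_mul_factors.
by rewrite mul_factorsC; apply: is_poly_mul_factors.
Qed.

Lemma integrable_scale d s : integrable L s -> integrable L (fps_scale d s).
Proof.
by move=> [fs [? s_poly]]; exists fs; rewrite mul_factors_scale; split; last exact: is_poly_scale.
Qed.

Lemma integrable_opp s : integrable L s -> integrable L (fps_opp s).
Proof.
by move=> [fs [? s_poly]]; exists fs; rewrite mul_factors_opp; split; last exact: is_poly_opp.
Qed.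

Lemma integrable_shift u s : integrable L s -> integrable L (shift u s).
Proof.
by move=> [fs [? s_poly]]; exists fs; rewrite mul_factors_shift; split; last exact: is_poly_shift.
Qed.

Lemma integrable_of_mul_one_minus p s : admissible p ->
  integrable L (mul_one_minus (L ^ p.1) p.2 s) -> integrable L s.
Proof.
move=> p_adm [fs [fs_adm s_poly]]; exists (p :: fs).
by rewrite mul_factors_cons -mul_factors_one_minus /= -/(admissible p) p_adm.
Qed.

End Integrability.

Arguments admissible {r}.

Section LinearFormsAndSupports.
Variables (A : comUnitRingType) (r : nat).
Implicit Types (s t : fps A r) (u v n : expo r) (c : A).
Implicit Types (lam : 'I_r -> int) (b be : int) (P : pred (expo r)).

Definition lin lam n : int := \sum_i lam i * (n i)%:Z.

Lemma lin_sub lam n v : expo_le v n -> lin lam (expo_sub n v) = lin lam n - lin lam v.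
Proof.
move/expo_leP => le_vn; rewrite /lin -sumrB; apply: eq_bigr => i _.
by rewrite /expo_sub -subzn ?le_vn // mulrBr.
Qed.

Lemma lin_add lam u v : lin lam (expo_add u v) = lin lam u + lin lam v.
Proof. by rewrite /lin -big_split; apply: eq_bigr => i _; rewrite /expo_add PoszD mulrDr. Qed.

Lemma lin_scale lam k v : lin lam (expo_scale k v) = k%:Z * lin lam v.
Proof. by rewrite /lin mulr_sumr; apply: eq_bigr => i _; rewrite /expo_scale PoszM; ring. Qed.

Lemma lin_oppf lam n : lin (\- lam) n = - lin lam n.
Proof. by rewrite /lin -sumrN; apply: eq_bigr => i _; rewrite mulNr. Qed.

Lemma lin_subf l1 l2 n : lin (l2 \- l1) n = lin l2 n - lin l1 n.
Proof. by rewrite /lin -sumrB; apply: eq_bigr => i _; rewrite mulrBl. Qed.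

Definition restr P s : fps A r := fun n => if P n then s n else 0.
Definition halfspace lam b : pred (expo r) := fun n => b <= lin lam n.
Definition hyperplane lam b : pred (expo r) := fun n => lin lam n == b.

Lemma restr_add P s t : restr P (fps_add s t) = fps_add (restr P s) (restr P t).
Proof. by apply: fps_ext => n; rewrite /restr /fps_add; case: ifP; rewrite ?addr0. Qed.

Lemma restr_opp P s : restr P (fps_opp s) = fps_opp (restr P s).
Proof. by apply: fps_ext => n; rewrite /restr /fps_opp; case: ifP; rewrite ?oppr0. Qed.

Lemma is_poly_restr P s : is_poly s -> is_poly (restr P s).
Proof. by move=> [B sB]; exists B => n n_out; rewrite /restr; case: ifP => // _; apply: sB. Qed.

Lemma restr_halfspace_mul_one_minus lam b c v s : lin lam v = 0 ->
  restr (halfspace lam b) (mul_one_minus c v s) = mul_one_minus c v (restr (halfspace lam b) s).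
Proof.
move=> v_neutral; apply: fps_ext => n; rewrite /restr /halfspace !mul_one_minusE /shift.
case le_vn: (expo_le v n); last by case: ifP; rewrite mulr0 ?subr0 ?oppr0.
by rewrite lin_sub // v_neutral subr0; case: ifP; rewrite ?mulr0 ?subr0.
Qed.

Lemma restr_hyperplaneE lam b s :
  restr (hyperplane lam b) s =
  fps_add (restr (halfspace lam b) s) (fps_opp (restr (halfspace lam (b + 1)) s)).
Proof.
apply: fps_ext => n; rewrite /restr /hyperplane /halfspace /fps_add /fps_opp /=.
have -> : (b + 1 <= lin lam n) = (b < lin lam n) by lia.
case: eqP => [->|neq_b]; first by rewrite lexx ltxx oppr0 addr0.
have -> : (b < lin lam n) = (b <= lin lam n) by lia.
by case: ifP; rewrite ?subrr ?oppr0 ?addr0.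
Qed.

Lemma restr_halfspace_succ lam b s :
  restr (halfspace lam (b + 1)) s =
  fps_add (restr (halfspace lam b) s) (fps_opp (restr (hyperplane lam b) s)).
Proof.
by apply: fps_ext => n; rewrite restr_hyperplaneE /fps_add /fps_opp opprD opprK addrA subrr add0r.
Qed.

Lemma restr_hyperplane_mul_one_minus lam b c v s :
  restr (hyperplane lam b) s =
  fps_add (restr (hyperplane lam b) (mul_one_minus c v s))
          (fps_scale c (shift v (restr (hyperplane lam (b - lin lam v)) s))).
Proof.
apply: fps_ext => n; rewrite /restr /hyperplane /fps_add /fps_scale mul_one_minusE /shift.
case le_vn: (expo_le v n); last by case: ifP; rewrite ?mulr0 ?subr0 ?addr0.
by rewrite lin_sub // (inj_eq (addIr _)); case: ifP; rewrite ?mulr0 ?subr0 ?addr0 ?subrK.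
Qed.

Lemma restr_halfspaceC lam b s :
  restr (halfspace lam b) s = fps_add s (fps_opp (restr (halfspace (\- lam) (1 - b)) s)).
Proof.
apply: fps_ext => n; rewrite /restr /halfspace /fps_add /fps_opp lin_oppf.
have -> : (1 - b <= - lin lam n) = ~~ (b <= lin lam n) by rewrite -ltNge; lia.
by case: ifP; rewrite /= ?oppr0 ?addr0 ?subrr.
Qed.

Definition vanishes_below lam be s := forall n, lin lam n < be -> s n = 0.

Lemma restr_halfspace_id lam be b s :
  vanishes_below lam be s -> b <= be -> restr (halfspace lam b) s = s.
Proof.
move=> s_vanishes le_b_be; apply: fps_ext => n; rewrite /restr /halfspace.
by case: lerP => // lt_n_b; rewrite s_vanishes // (lt_le_trans lt_n_b).
Qed.

Lemma restr_hyperplane_eq0 lam be b s :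
  vanishes_below lam be s -> b < be -> restr (hyperplane lam b) s = fps0.
Proof.
move=> s_vanishes lt_b_be; apply: fps_ext => n; rewrite /restr /hyperplane /fps0.
by case: eqP => // n_b; rewrite s_vanishes // n_b.
Qed.

Lemma poly_vanishes_below lam s : is_poly s -> exists be, vanishes_below lam be s.
Proof.
move=> [B sB]; exists (- \sum_i `|lam i| * B%:Z) => n n_low.
apply: sB; apply/negP => /forallP n_in.
move: n_low; apply/negP; rewrite -leNgt /lin -sumrN; apply: ler_sum => i _.
by have := n_in i; move: (n i) => k; nia.
Qed.

(* Along [v], the coefficients of [s] are obtained from those of [(1 - c T^v) s] by
   well-founded recursion on the total degree. *)
Lemma vanishes_below_of_mul_one_minus lam be c v s :
  0 <= lin lam v -> [exists i, v i != 0%N] ->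
  vanishes_below lam be (mul_one_minus c v s) -> vanishes_below lam be s.
Proof.
move=> v_nonneg v_neq0 ms_vanishes n.
have [k lt_n_k] : exists k, (expo_sum n < k)%N by exists (expo_sum n).+1.
elim: k n lt_n_k => [|k IH] n // lt_n_k n_low.
have := ms_vanishes n n_low; rewrite mul_one_minusE /shift.
case le_vn: (expo_le v n); last by rewrite mulr0 subr0.
rewrite (IH (expo_sub n v)) ?mulr0 ?subr0 //; first by have := expo_sum_sub_lt le_vn v_neq0; lia.
by rewrite lin_sub //; lia.
Qed.

Fixpoint div_one_minus_trunc c v s (k : nat) : fps A r :=
  if k is k'.+1 then fun n => s n + c * shift v (div_one_minus_trunc c v s k') n
  else fps0.

Lemma div_one_minus_truncE c v s : [exists i, v i != 0%N] -> forall k k' n,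
  (expo_sum n < k)%N -> (expo_sum n < k')%N ->
  div_one_minus_trunc c v s k n = div_one_minus_trunc c v s k' n.
Proof.
move=> v_neq0; elim=> [|k IH] [|k'] n //= lt_n_k lt_n_k'.
rewrite /shift; case le_vn: (expo_le v n) => //; congr (_ + _ * _).
have lt_sub := expo_sum_sub_lt le_vn v_neq0; apply: IH; lia.
Qed.

Lemma mul_one_minus_surj c v s : [exists i, v i != 0%N] ->
  exists t, mul_one_minus c v t = s.
Proof.
move=> v_neq0; exists (fun n => div_one_minus_trunc c v s (expo_sum n).+1 n).
apply: fps_ext => n; rewrite mul_one_minusE /shift /=.
case le_vn: (expo_le v n); last by rewrite /shift le_vn mulr0 !subr0 addr0.
rewrite /shift le_vn.
rewrite (@div_one_minus_truncE c v s v_neq0 (expo_sum n) (expo_sum (expo_sub n v)).+1) ?addrK //.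
by have := expo_sum_sub_lt le_vn v_neq0; lia.
Qed.

End LinearFormsAndSupports.

Section HalfspaceRestriction.
Variables (A : comUnitRingType) (r : nat) (L : A).
Implicit Types (s t : fps A r) (fs gs : seq (int * expo r)) (p x y : int * expo r).
Implicit Types (lam : 'I_r -> int) (b be : int).

Lemma vanishes_below_of_mul_factors lam be fs s :
  all admissible fs -> all (fun p => 0 <= lin lam p.2) fs ->
  vanishes_below lam be (mul_factors L fs s) -> vanishes_below lam be s.
Proof.
elim: fs => [|p fs IH] //= /andP [/andP [_ p_neq0] fs_adm] /andP [p_nonneg fs_nonneg].
move=> ps_vanishes; apply: (IH fs_adm fs_nonneg).
exact: vanishes_below_of_mul_one_minus ps_vanishes.
Qed.

Lemma restr_halfspace_of_positive_factor lam x fs s :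
  admissible x -> all admissible fs -> all (fun p => 0 <= lin lam p.2) fs ->
  0 < lin lam x.2 -> is_poly (mul_factors L (x :: fs) s) ->
  (forall b, integrable L (restr (halfspace lam b) (mul_one_minus (L ^ x.1) x.2 s))) ->
  forall b, integrable L (restr (halfspace lam b) s).
Proof.
move=> x_adm fs_adm fs_nonneg x_pos xfs_poly IH.
have [be xfs_vanishes] := poly_vanishes_below lam xfs_poly.
have s_vanishes : vanishes_below lam be s.
  by apply: vanishes_below_of_mul_factors xfs_vanishes; rewrite /= ?x_adm ?(ltW x_pos).
have s_int : integrable L s.
  by exists (x :: fs); rewrite /= -/(admissible x) x_adm.
have slice_int (k : nat) b : b < be + k%:Z -> integrable L (restr (hyperplane lam b) s).
  elim: k b => [|k IHk] b lt_b.
    by rewrite addr0 in lt_b; rewrite (restr_hyperplane_eq0 s_vanishes lt_b); exact: integrable0.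
  rewrite (restr_hyperplane_mul_one_minus lam b (L ^ x.1) x.2 s).
  apply: integrable_add.
    by rewrite restr_hyperplaneE; apply: integrable_add; [exact: IH | apply/integrable_opp/IH].
  by apply/integrable_scale/integrable_shift/IHk; lia.
have above_int (k : nat) : integrable L (restr (halfspace lam (be + k%:Z)) s).
  elim: k => [|k IHk]; first by rewrite addr0 (restr_halfspace_id s_vanishes).
  have -> : be + k.+1%:Z = be + k%:Z + 1 by lia.
  rewrite restr_halfspace_succ; apply: integrable_add => //.
  by apply/integrable_opp/(slice_int k.+1); lia.
move=> b; have [le_b_be|lt_be_b] := lerP b be.
  by rewrite (restr_halfspace_id s_vanishes).
have -> : b = be + (`|b - be|%N)%:Z by rewrite gez0_abs; [ring | lia].
exact: above_int.
Qed.

(* Counting the factors of nonzero [lam]-weight twice makes every reduction step below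
   decrease it. *)
Definition weight lam fs : nat := (size fs + count (fun p => lin lam p.2 != 0) fs)%N.

Lemma weight_cons lam x fs :
  weight lam (x :: fs) = ((weight lam fs).+1 + (lin lam x.2 != 0))%N.
Proof. by rewrite /weight /= addSn addnCA addnC. Qed.

Lemma weight_cat_cons lam f1 x f2 : weight lam (f1 ++ x :: f2) = weight lam (x :: f1 ++ f2).
Proof. by rewrite /weight count_cat_cons /= !size_cat addnS. Qed.

Lemma weight_oppf lam fs : weight (\- lam) fs = weight lam fs.
Proof.
by rewrite /weight; congr (_ + _)%N; apply: eq_count => p; rewrite lin_oppf oppr_eq0.
Qed.

(* Take [kx = |lam y.2|] and [ky = |lam x.2|]; splitting the power of [L] with integer
   exponents is where invertibility of [L] is needed. *)
Lemma neutral_combination lam x y : L \is a GRing.unit ->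
  admissible x -> admissible y -> 0 < lin lam x.2 -> lin lam y.2 < 0 ->
  exists (kx ky : nat) z,
    [/\ admissible z, lin lam z.2 = 0, L ^ z.1 = (L ^ x.1) ^+ kx * (L ^ y.1) ^+ ky
       & z.2 = expo_add (expo_scale kx x.2) (expo_scale ky y.2)].
Proof.
move=> unit_L /andP [x1_neg /existsP [i xi_neq0]] /andP [y1_neg _] x_pos y_neg.
set kx := `|lin lam y.2|%N; set ky := `|lin lam x.2|%N.
have kx_pos : (0 < kx)%N by rewrite absz_gt0 ltr0_neq0.
have ky_pos : (0 < ky)%N by rewrite absz_gt0 lt0r_neq0.
exists kx, ky, (x.1 * kx%:Z + y.1 * ky%:Z, expo_add (expo_scale kx x.2) (expo_scale ky y.2)).
split=> //=.
- apply/andP; split.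
    by move: (x.1) (y.1) (kx) (ky) x1_neg y1_neg kx_pos ky_pos => a b' k m /=; nia.
  apply/existsP; exists i; rewrite /= /expo_add /expo_scale.
  by move: (kx) (ky) xi_neq0 kx_pos => k m; lia.
- rewrite lin_add !lin_scale /kx /ky ltz0_abs // gtz0_abs //; ring.
- by rewrite exprzDr // -!exprz_exp.
Qed.

Definition halfspace_restrictable (N : nat) : Prop :=
  forall lam fs s b, (weight lam fs <= N)%N -> all admissible fs ->
  is_poly (mul_factors L fs s) -> integrable L (restr (halfspace lam b) s).

Lemma halfspace_restrictable0 : halfspace_restrictable 0.
Proof.
by move=> lam [|p fs] s b //= _ _ s_poly; apply/integrable_poly/is_poly_restr.
Qed.

Section Step.
Variable N : nat.
Hypothesis IH : halfspace_restrictable N.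

Lemma restr_halfspace_neutral lam x fs s b : lin lam x.2 = 0 ->
  (weight lam (x :: fs) <= N.+1)%N -> all admissible (x :: fs) ->
  is_poly (mul_factors L (x :: fs) s) -> integrable L (restr (halfspace lam b) s).
Proof.
rewrite weight_cons => x_neutral; rewrite x_neutral eqxx addn0 ltnS.
move=> le_w /andP [x_adm fs_adm] xfs_poly.
apply: (integrable_of_mul_one_minus x_adm).
rewrite -restr_halfspace_mul_one_minus //.
by apply: (@IH lam fs); rewrite ?mul_factors_one_minus.
Qed.

Lemma restr_halfspace_positive lam fs s b :
  all (fun p => 0 < lin lam p.2) fs ->
  (weight lam fs <= N.+1)%N -> all admissible fs -> is_poly (mul_factors L fs s) ->
  integrable L (restr (halfspace lam b) s).
Proof.
case: fs => [|x fs] /= fs_pos le_w fs_adm fs_poly.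
  exact/integrable_poly/is_poly_restr.
move: fs_pos fs_adm => /andP [x_pos fs_pos] /andP [x_adm fs_adm].
apply: (restr_halfspace_of_positive_factor x_adm fs_adm _ x_pos fs_poly) => [|b'].
  by apply: sub_all fs_pos => p /ltW.
apply: (@IH lam fs) => //; last by rewrite mul_factors_one_minus.
by move: le_w; rewrite weight_cons gt_eqF //; lia.
Qed.

Lemma restr_halfspace_negative lam fs s b :
  all (fun p => lin lam p.2 < 0) fs ->
  (weight lam fs <= N.+1)%N -> all admissible fs -> is_poly (mul_factors L fs s) ->
  integrable L (restr (halfspace lam b) s).
Proof.
move=> fs_neg le_w fs_adm fs_poly; rewrite restr_halfspaceC.
apply: integrable_add; first by exists fs.
apply/integrable_opp/(restr_halfspace_positive (fs := fs)); rewrite ?weight_oppf //.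
by apply: sub_all fs_neg => p; rewrite /= lin_oppf oppr_gt0.
Qed.

Section MixedSigns.
Hypothesis unit_L : L \is a GRing.unit.

Lemma restr_halfspace_mixed lam x y fs s b :
  0 < lin lam x.2 -> lin lam y.2 < 0 ->
  (weight lam (x :: y :: fs) <= N.+1)%N -> all admissible (x :: y :: fs) ->
  is_poly (mul_factors L (x :: y :: fs) s) -> integrable L (restr (halfspace lam b) s).
Proof.
move=> x_pos y_neg + /and3P [x_adm y_adm fs_adm] xy_poly.
rewrite !weight_cons (gt_eqF x_pos) (lt_eqF y_neg) => le_w.
have [kx [ky [z [z_adm z_neutral Lz z2E]]]] := neutral_combination unit_L x_adm y_adm x_pos y_neg.
set c := (L ^ x.1) ^+ kx in Lz; set u := expo_scale kx x.2 in z2E.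
set d := (L ^ y.1) ^+ ky in Lz; set w := expo_scale ky y.2 in z2E.
have [t sE] : exists t, mul_one_minus (L ^ z.1) z.2 t = s.
  by apply: mul_one_minus_surj; case/andP: z_adm.
have cu_poly : is_poly (mul_one_minus c u (mul_one_minus (L ^ y.1) y.2 (mul_factors L fs s))).
  exact: is_poly_mul_one_minus_pow.
have dw_poly : is_poly (mul_one_minus d w (mul_one_minus (L ^ x.1) x.2 (mul_factors L fs s))).
  by apply: is_poly_mul_one_minus_pow; rewrite mul_one_minusC.
have cudw_poly : is_poly (mul_one_minus c u (mul_one_minus d w (mul_factors L fs s))).
  apply: is_poly_mul_one_minus_pow; rewrite mul_one_minusC.
  by apply: is_poly_mul_one_minus_pow; rewrite mul_one_minusC.
have z_weight gs : weight lam (z :: gs) = (weight lam gs).+1.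
  by rewrite weight_cons z_neutral eqxx addn0.
rewrite -sE Lz z2E mul_one_minus_mul restr_add restr_add restr_opp.
apply: integrable_add; [apply: integrable_add | apply: integrable_opp].
- apply: (@IH lam (z :: y :: fs)); first by rewrite !z_weight weight_cons (lt_eqF y_neg); lia.
    by rewrite /= z_adm y_adm.
  rewrite /= mul_factors_one_minus (mul_one_minusC (L ^ y.1) c) (mul_one_minusC (L ^ z.1) c).
  by rewrite (mul_one_minusC (L ^ z.1) (L ^ y.1)) -mul_factors_one_minus sE.
- apply: (@IH lam (z :: x :: fs)); first by rewrite !z_weight weight_cons (gt_eqF x_pos); lia.
    by rewrite /= z_adm x_adm.
  rewrite /= mul_factors_one_minus (mul_one_minusC (L ^ x.1) d) (mul_one_minusC (L ^ z.1) d).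
  by rewrite (mul_one_minusC (L ^ z.1) (L ^ x.1)) -mul_factors_one_minus sE.
- apply: (@IH lam (z :: fs)); first by rewrite z_weight; lia.
    by rewrite /= z_adm.
  rewrite /= !mul_factors_one_minus (mul_one_minusC (L ^ z.1) c) (mul_one_minusC (L ^ z.1) d).
  by rewrite -mul_factors_one_minus sE.
Qed.

Lemma halfspace_restrictable_succ : halfspace_restrictable N.+1.
Proof.
move=> lam fs s b le_w fs_adm fs_poly.
have rotate gs f1 x f2 : gs = f1 ++ x :: f2 ->
    [/\ (weight lam gs <= N.+1)%N, all admissible gs & is_poly (mul_factors L gs s)] ->
    [/\ (weight lam (x :: f1 ++ f2) <= N.+1)%N, all admissible (x :: f1 ++ f2)
      & is_poly (mul_factors L (x :: f1 ++ f2) s)].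
  by move=> ->; rewrite weight_cat_cons all_cat_cons mul_factors_cat_cons.
have fs_ok : [/\ (weight lam fs <= N.+1)%N, all admissible fs & is_poly (mul_factors L fs s)].
  by [].
have [/split_of_has [f1 [x [f2 [fsE /eqP x_neutral]]]] | no_neutral] :=
  boolP (has (fun p => lin lam p.2 == 0) fs).
  by have [] := rotate _ _ _ _ fsE fs_ok; apply: restr_halfspace_neutral.
have [fs_pos | fs_npos] := boolP (all (fun p => 0 < lin lam p.2) fs).
  exact: (@restr_halfspace_positive lam fs s b fs_pos).
have [fs_neg | fs_nneg] := boolP (all (fun p => lin lam p.2 < 0) fs).
  exact: (@restr_halfspace_negative lam fs s b fs_neg).
move: fs_nneg fs_npos; rewrite -!has_predC => + /split_of_has [f1 [y [f2 [fsE y_npos]]]].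
move: no_neutral; rewrite fsE !has_cat_cons /= => /norP [y_neq0 rest_no_neutral].
have y_neg : lin lam y.2 < 0 by move: y_npos y_neq0 => /=; lia.
rewrite y_neg /= => /split_of_has [g1 [x [g2 [restE x_nneg]]]].
move: rest_no_neutral; rewrite restE has_cat_cons /= => /norP [x_neq0 _].
have x_pos : 0 < lin lam x.2 by move: x_nneg x_neq0 => /=; lia.
have [] := rotate (y :: g1 ++ x :: g2) (y :: g1) x g2 erefl.
  by rewrite -restE; apply: rotate fsE fs_ok.
exact: restr_halfspace_mixed.
Qed.

End MixedSigns.

End Step.

Theorem integrable_restr_halfspace lam b s : L \is a GRing.unit ->
  integrable L s -> integrable L (restr (halfspace lam b) s).
Proof.
move=> unit_L [fs [fs_adm fs_poly]].
have : halfspace_restrictable (weight lam fs).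
  elim: (weight lam fs) => [|N IH]; first exact: halfspace_restrictable0.
  exact: halfspace_restrictable_succ.
by apply.
Qed.

End HalfspaceRestriction.

Section BasicCells.
Variable r : nat.

Definition coord_form (f : 'I_r -> 'I_r) (k : nat) : 'I_r -> int :=
  fun i => if insub k.-1 is Some j then (f j == i)%:Z else 0.

Lemma lin_coord_form f k (n : expo r) : lin (coord_form f k) n = (Defs.coord (n \o f) k)%:Z.
Proof.
rewrite /lin /coord_form /Defs.coord; case: (insub k.-1) => [j|] /=.
  rewrite (bigD1 (f j)) //= eqxx mul1r big1 ?addr0 // => i /negbTE fj_i.
  by rewrite eq_sym fj_i mul0r.
by rewrite big1 // => i _; rewrite mul0r.
Qed.

Definition in_basic_cellb (rs : seq nat) (m : expo r) : bool :=
  all (fun j =>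
      all (fun k => (nth 0%N rs j.-1 < k)%N ==> (Defs.coord m k == Defs.coord m (nth 0%N rs j)))
          (iota 0 (nth 0%N rs j).+1)
   && ((2 <= j)%N ==> (Defs.coord m (nth 0%N rs j.-1) < Defs.coord m (nth 0%N rs j))%N))
    (iota 1 (size rs).-1).

Lemma in_basic_cellP rs m : reflect (in_basic_cell rs m) (in_basic_cellb rs m).
Proof.
apply: (iffP allP) => [cell j j_range | cell j].
  have j_in : j \in iota 1 (size rs).-1 by rewrite mem_iota; lia.
  have /andP [/allP eq_k /implyP lt_j] := cell j j_in.
  split=> // k /andP [lt_k le_k]; apply/eqP.
  have k_in : k \in iota 0 (nth 0%N rs j).+1 by rewrite mem_iota; lia.
  by move: (eq_k k k_in) => /implyP; apply.
rewrite mem_iota => j_range; have [|eq_k lt_j] := cell j; first by lia.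
apply/andP; split; last exact/implyP.
apply/allP => k; rewrite mem_iota => k_range; apply/implyP => lt_k.
by apply/eqP/eq_k; rewrite lt_k /=; lia.
Qed.

End BasicCells.

Section Restrictions.
Variables (A : comUnitRingType) (r : nat) (L : A).
Implicit Types (P Q : pred (expo r)) (lam : 'I_r -> int).

Definition preserves_integrable P :=
  forall s : fps A r, integrable L s -> integrable L (restr P s).

Lemma preserves_integrable_eq P Q : P =1 Q -> preserves_integrable P -> preserves_integrable Q.
Proof.
move=> PQ P_int s s_int.
have <- : restr P s = restr Q s by apply: fps_ext => n; rewrite /restr PQ.
exact: P_int.
Qed.

Lemma preserves_integrableT : preserves_integrable predT.
Proof. by move=> s s_int; have -> : restr predT s = s by apply: fps_ext. Qed.

Lemma preserves_integrableI P Q :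
  preserves_integrable P -> preserves_integrable Q -> preserves_integrable (predI P Q).
Proof.
move=> P_int Q_int s s_int; have -> : restr (predI P Q) s = restr P (restr Q s).
  by apply: fps_ext => n; rewrite /restr /=; case: (P n); case: (Q n).
exact/P_int/Q_int.
Qed.

Lemma preserves_integrable_implyr (c : bool) P :
  preserves_integrable P -> preserves_integrable (fun n => c ==> P n).
Proof. by case: c => // _; apply: preserves_integrableT. Qed.

Lemma preserves_integrable_all (T : Type) (P : T -> pred (expo r)) (xs : seq T) :
  (forall x, preserves_integrable (P x)) ->
  preserves_integrable (fun n => all (fun x => P x n) xs).
Proof.
move=> P_int; elim: xs => [|x xs IH] /=; first exact: preserves_integrableT.
exact: (preserves_integrableI (P_int x) IH).
Qed.

Section UnitL.
Hypothesis unit_L : L \is a GRing.unit.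

Lemma preserves_integrable_le l1 l2 :
  preserves_integrable (fun n => lin l1 n <= lin l2 n).
Proof.
apply: (@preserves_integrable_eq (halfspace (l2 \- l1) 0)).
  by move=> n; rewrite /halfspace lin_subf subr_ge0.
by move=> s s_int; exact: integrable_restr_halfspace.
Qed.

Lemma preserves_integrable_lt l1 l2 :
  preserves_integrable (fun n => lin l1 n < lin l2 n).
Proof.
apply: (@preserves_integrable_eq (halfspace (l2 \- l1) 1)).
  by move=> n; rewrite /halfspace lin_subf; lia.
by move=> s s_int; exact: integrable_restr_halfspace.
Qed.

Lemma preserves_integrable_eqn l1 l2 :
  preserves_integrable (fun n => lin l1 n == lin l2 n).
Proof.
apply: (@preserves_integrable_eq (predI (fun n => lin l1 n <= lin l2 n)
                                        (fun n => lin l2 n <= lin l1 n))).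
  by move=> n; rewrite /= eq_le.
exact: preserves_integrableI (preserves_integrable_le _ _) (preserves_integrable_le _ _).
Qed.

Lemma preserves_integrable_basic_cell rs (f : 'I_r -> 'I_r) :
  preserves_integrable (fun n => in_basic_cellb rs (n \o f)).
Proof.
apply: preserves_integrable_all => j.
apply: (preserves_integrableI (P := fun n => all _ _)); last first.
  apply: preserves_integrable_implyr.
  apply: (preserves_integrable_eq _ (preserves_integrable_lt (coord_form f _) (coord_form f _))).
  by move=> n; rewrite !lin_coord_form ltz_nat.
apply: preserves_integrable_all => k; apply: preserves_integrable_implyr.
apply: (preserves_integrable_eq _ (preserves_integrable_eqn (coord_form f _) (coord_form f _))).
by move=> n; rewrite !lin_coord_form eqz_nat.
Qed.

End UnitL.

End Restrictions.

Theorem lemma5p6 (A : comUnitRingType) (L : A)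
    (hL : L \is a GRing.unit)
    (h1L : forall n : nat, (0 < n)%N -> (1 - L ^+ n) \is a GRing.unit)
    (r : nat) (a : fps A r) :
  integrable L a ->
  forall Delta : expo r -> Prop, ordered_cell Delta ->
  forall aDelta : fps A r,
    (forall n, Delta n -> aDelta n = a n) ->
    (forall n, ~ Delta n -> aDelta n = 0) ->
    integrable L aDelta.
Proof.
move=> a_int Delta [rs [rho [_ DeltaE]]] aD aD_in aD_out.
have DeltaP n : Delta n <-> in_basic_cellb rs (n \o (rho^-1)%g).
  rewrite DeltaE; split => [[m [m_cell nE]]|n_cell].
    have -> : n \o (rho^-1)%g = m by apply: expo_ext => j; rewrite /= nE permKV.
    exact/in_basic_cellP.
  by exists (n \o (rho^-1)%g); split => [|i]; [exact/in_basic_cellP | rewrite /= permK].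
have -> : aD = restr (fun n => in_basic_cellb rs (n \o (rho^-1)%g)) a.
  apply: fps_ext => n; rewrite /restr; case: ifP => [/DeltaP/aD_in //|n_out].
  by apply: aD_out => /DeltaP; rewrite n_out.
exact: preserves_integrable_basic_cell.
Qed.
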